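(* Fix $r\ge 2$ and $\eta>0$. There is $c>0$ depending only on $\eta$ such that, if $p\gg\log n/n$, then a.a.s. for every $Q\in\mathcal{Q}_H$ with $Q\subseteq G_{n,p}$ and every $k\in[r]$, \[ |V^k(Q)|\ge\Big|\bigcup_{v\in V(Q)}N_Q(v)\cap V^k(Q)\Big|\ge c\cdot\min\{n,\,k(Q)\,np\}. \]
   Context: An $[r]$-coloured graph is a graph whose vertices are coloured from $[r]$ (not necessarily properly); $V^k(Q)$ denotes the vertices of $Q$ with colour $k$. $\mathcal{Q}_H$ is the family of $[r]$-coloured graphs $Q\subseteq K_n$ containing an independent set $X_Q\subseteq V^1(Q)$ of size $o(n)$ (bounded by a fixed function $s(n)=o(n)$) such that every edge of $Q$ has an endpoint in $X_Q$ and every $v\in X_Q$ has exactly $\eta np$ neighbours in $Q$ in each colour class $V^k(Q)$, $k\in[r]$ (assume $\eta np$ is an integer); $k(Q)=|X_Q|$. $Q\subseteq G_{n,p}$ means every edge of $Q$ is an edge of $G_{n,p}$. *)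

From mathcomp Require Import all_boot all_order all_algebra.
From mathcomp Require Import all_classical all_reals all_analysis.
Set Implicit Arguments. Unset Strict Implicit. Unset Printing Implicit Defensive.
Import Order.TTheory GRing.Theory Num.Theory.
Local Open Scope ring_scope.

(* Vertices of K_n are 'I_n.  An (undirected) edge {u,v} is stored as the
   ordered pair (u,v) with u < v; a graph on [n] is a subset of [pairs n]. *)
Definition pairs (n : nat) : {set 'I_n * 'I_n} := [set e : 'I_n * 'I_n | (val e.1 < val e.2)%N].

Definition adjE (n : nat) (E : {set 'I_n * 'I_n}) (u v : 'I_n) : bool :=
  ((u, v) \in E) || ((v, u) \in E).

Definition nbhd (n : nat) (E : {set 'I_n * 'I_n}) (v : 'I_n) : {set 'I_n} :=
  [set u | adjE E v u].

Definition colour_class (n : nat) (VQ : {set 'I_n}) (col : 'I_n -> nat) (k : nat)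
  : {set 'I_n} := [set v in VQ | col v == k].

(* Probability of an event under G_{n,p}: each of the C(n,2) edges present
   independently with probability p. *)
Definition gnp_prob (R : realType) (n : nat) (p : R)
  (P : {set 'I_n * 'I_n} -> Prop) : R :=
  \sum_(E : {set 'I_n * 'I_n} | E \subset pairs n)
     (if `[< P E >] then p ^+ #|E| * (1 - p) ^+ (#|pairs n| - #|E|) else 0).

(* The [r]-coloured graph Q = (VQ, col, EQ) together with the witness X = X_Q
   belongs to Q_H (with bound s and degree parameter eta*n*p). *)
Definition in_QH (R : realType) (n r : nat) (s : nat -> nat) (eta p : R)
  (VQ : {set 'I_n}) (col : 'I_n -> nat) (EQ : {set 'I_n * 'I_n})
  (X : {set 'I_n}) : Prop :=
  EQ \subset pairs n /\
  (forall e, e \in EQ -> e.1 \in VQ /\ e.2 \in VQ) /\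
  (forall v, v \in VQ -> (1 <= col v <= r)%N) /\
  X \subset colour_class VQ col 1 /\
  (forall u v, u \in X -> v \in X -> ~~ adjE EQ u v) /\
  (#|X| <= s n)%N /\
  (forall e, e \in EQ -> e.1 \in X \/ e.2 \in X) /\
  (forall v k, v \in X -> (1 <= k <= r)%N ->
     (#|nbhd EQ v :&: colour_class VQ col k|)%:R = eta * n%:R * p).

Definition good_event (R : realType) (n r : nat) (s : nat -> nat) (eta p c : R)
  (E : {set 'I_n * 'I_n}) : Prop :=
  forall VQ col EQ X, in_QH r s eta p VQ col EQ X -> EQ \subset E ->
  forall k : nat, (1 <= k <= r)%N ->
    (#|(\bigcup_(v in VQ) nbhd EQ v) :&: colour_class VQ col k|
       <= #|colour_class VQ col k|)%N /\
    c * Num.min (n%:R) (#|X|%:R * n%:R * p)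
      <= (#|(\bigcup_(v in VQ) nbhd EQ v) :&: colour_class VQ col k|)%:R.

(* First moment method.  Suppose Q ⊆ G(n,p) violates the bound for the colour k;
   put x = |X_Q|, m = ηnp and Y = (⋃_v N_Q(v)) ∩ V^k(Q), y = |Y|.  As X_Q is
   independent and every v ∈ X_Q has m neighbours in V^k(Q), all lying in Y,
   G(n,p) contains x·m distinct edges between X_Q and Y, while y < c·min(n, x·np)
   forces x > 0, 4y ≤ xm and y ≤ cn.  A union bound over such (X_Q, Y, edges)
   bounds the failure probability by  Σ_{x,y} C(n,x) C(n,y) C(xy,xm) p^{xm}.
   Using C(a,b) ≤ (ea/b)^b and c ≤ min(η/e², η²/e³), each term is at most
   (n e^{-m/2})^x ≤ n^{-4} as soon as m ≥ 10 ln n, so the failure probability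
   is O(1/n). *)

From mathcomp Require Import all_boot all_order all_algebra.
From mathcomp Require Import all_classical all_reals all_analysis.
From mathcomp Require Import lra ring zify.
(* Re-imported so that the finset lemma names shadow their classical_sets homonyms. *)
From mathcomp Require Import fintype finset bigop.
Set Implicit Arguments. Unset Strict Implicit. Unset Printing Implicit Defensive.
Import Order.TTheory GRing.Theory Num.Theory.
Import numFieldNormedType.Exports.
Local Open Scope ring_scope.

Lemma ffact_leq_expn (n m : nat) : (n ^_ m <= n ^ m)%N.
Proof.
elim: m n => [|m IH] n; first by rewrite ffactn0 expn0.
rewrite ffactnS expnS leq_mul //.
apply: leq_trans (IH _) _.
case: n => [|n] /=; first by case: m {IH}.
by case: m {IH} => // m; rewrite leq_exp2r.
Qed.

Lemma bin_leq_expn (n m : nat) : ('C(n, m) <= n ^ m)%N.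
Proof.
apply: leq_trans (ffact_leq_expn n m).
by rewrite -bin_ffact leq_pmulr // fact_gt0.
Qed.

Lemma exists_subset_card (T : finType) (A : {set T}) (k : nat) :
  (k <= #|A|)%N -> exists2 B : {set T}, B \subset A & #|B| = k.
Proof.
elim: k => [|k IH] hk; first by exists set0; rewrite ?sub0set ?cards0.
have [B BA cB] := IH (ltnW hk).
have : (0 < #|A :\: B|)%N by rewrite cardsDS // cB subn_gt0.
case/card_gt0P => x; rewrite inE => /andP[xB xA].
exists (x |: B); first by rewrite subUset sub1set xA BA.
by rewrite cardsU1 xB cB.
Qed.

Section SumsOverSubsets.
Variable R : realType.

Lemma sum_subsets_card (T : finType) (B : {set T}) (G : nat -> R) :
  \sum_(A : {set T} | A \subset B) G #|A| =
  \sum_(i < #|B|.+1) 'C(#|B|, i)%:R * G i.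
Proof.
rewrite (partition_big (fun A : {set T} => (inord #|A| : 'I_#|B|.+1)) predT) //=.
apply: eq_bigr => i _.
rewrite (eq_bigr (fun _ => G i)); last first.
  by move=> A /andP[AB /eqP <-]; rewrite inordK // ltnS subset_leq_card.
rewrite sumr_const -cards_draws mulr_natl; congr (_ *+ _).
apply/eq_card => A; rewrite !inE unfold_in /=.
case AB: (A \subset B) => //=.
have lt_AB : (#|A| < #|B|.+1)%N by rewrite ltnS subset_leq_card.
apply/eqP/eqP => [<-|->]; first by rewrite inordK.
exact/val_inj/inordK.
Qed.

Lemma sum_sets_card (T : finType) (G : nat -> R) :
  \sum_(A : {set T}) G #|A| = \sum_(i < #|T|.+1) 'C(#|T|, i)%:R * G i.
Proof.
have := sum_subsets_card [set: T] G; rewrite cardsT => <-.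
by apply: eq_bigl => A; rewrite subsetT.
Qed.

Definition binomial_weight (T : finType) (B : {set T}) (q : R) (E : {set T}) : R :=
  q ^+ #|E| * (1 - q) ^+ (#|B| - #|E|).

Lemma binomial_weight_ge0 (T : finType) (B E : {set T}) (q : R) :
  0 <= q <= 1 -> 0 <= binomial_weight B q E.
Proof.
by case/andP=> q0 q1; rewrite mulr_ge0 // exprn_ge0 // subr_ge0.
Qed.

Lemma sum_binomial_weight (T : finType) (B : {set T}) (q : R) :
  \sum_(E : {set T} | E \subset B) binomial_weight B q E = 1.
Proof.
rewrite (sum_subsets_card B (fun k => q ^+ k * (1 - q) ^+ (#|B| - k))).
transitivity ((1 - q + q) ^+ #|B|); last by rewrite subrK expr1n.
by rewrite exprDn; apply: eq_bigr => i _; rewrite mulr_natl mulrC.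
Qed.

Lemma sum_binomial_weight_supsets (T : finType) (B F : {set T}) (q : R) :
  F \subset B ->
  \sum_(E : {set T} | (E \subset B) && (F \subset E)) binomial_weight B q E = q ^+ #|F|.
Proof.
move=> FB.
rewrite -[RHS]mulr1 -(sum_binomial_weight (B :\: F) q) mulr_sumr.
have FUK (E : {set T}) : F \subset E -> E :\: F :|: F = E.
  move=> FE; apply/setP => x; rewrite !inE.
  by case: (boolP (x \in F)) => xF; rewrite ?orbT ?orbF ?andbT // (subsetP FE).
rewrite (reindex_onto (fun E => E :|: F) (fun E => E :\: F)); last first.
  by move=> E /andP[_ /FUK].
have sub_iff (E : {set T}) :
    (E :|: F \subset B) && (F \subset E :|: F) && ((E :|: F) :\: F == E) =
    (E \subset B :\: F).
  rewrite subsetUr andbT subUset FB andbT setDUl setDv setU0.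
  apply/andP/idP => [[EB /eqP <-]|EBF]; first exact: setSD.
  by move: EBF; rewrite subsetD => /andP[-> /setDidPl ->].
apply: eq_big => E; first exact: sub_iff.
rewrite sub_iff subsetD => /andP[EB dEF].
have cEF : #|E :|: F| = (#|E| + #|F|)%N.
  by rewrite cardsU (disjoint_setI0 dEF) cards0 subn0.
rewrite /binomial_weight cEF cardsDS // exprD -subnDA [(#|F| + _)%N]addnC.
by rewrite mulrA [q ^+ #|E| * _]mulrC.
Qed.
End SumsOverSubsets.

Section BinomialBounds.
Variable R : realType.
Local Notation e := (expR (1 : R)).

Lemma natrS_expn_le_expR1 (b : nat) : (b.+1%:R : R) ^+ b <= e * b%:R ^+ b.
Proof.
case: b => [|b]; first by rewrite !expr0 mulr1 -expR0 ler_expR.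
have b0 : (0 : R) < b.+1%:R by rewrite ltr0n.
have -> : (b.+2%:R : R) = b.+1%:R * (1 + 1 / b.+1%:R).
  by rewrite mulrDr mulr1 mul1r mulfV ?gt_eqF // -natr1.
rewrite exprMn mulrC ler_wpM2r ?exprn_ge0 ?ler0n //.
have -> : e = expR (1 / b.+1%:R) ^+ b.+1 by rewrite -expRM_natr mul1r mulVf ?gt_eqF.
by apply: lerXn2r; rewrite ?nnegrE ?expR_ge0 ?expR_ge1Dx.
Qed.

Lemma expn_le_expR1_fact (b : nat) : (b%:R : R) ^+ b <= e ^+ b * b`!%:R.
Proof.
elim: b => [|b IH]; first by rewrite !expr0 mul1r.
rewrite exprS factS natrM exprS.
have -> : e * e ^+ b * (b.+1%:R * b`!%:R) = b.+1%:R * (e * (e ^+ b * b`!%:R)) by ring.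
rewrite ler_wpM2l ?ler0n //; apply: le_trans (natrS_expn_le_expR1 b) _.
by rewrite ler_wpM2l ?expR_ge0.
Qed.

Lemma bin_le_expR1 (a b : nat) : (0 < b)%N ->
  ('C(a, b)%:R : R) <= (e * a%:R / b%:R) ^+ b.
Proof.
move=> b0; have bb0 : (0 : R) < b%:R ^+ b by rewrite exprn_gt0 // ltr0n.
rewrite expr_div_n ler_pdivlMr // exprMn.
apply: le_trans (_ : 'C(a, b)%:R * (e ^+ b * b`!%:R) <= _).
  by rewrite ler_wpM2l ?ler0n ?expn_le_expR1_fact.
rewrite mulrCA -natrM bin_ffact ler_wpM2l ?exprn_ge0 ?expR_ge0 //.
by rewrite -natrX ler_nat ffact_leq_expn.
Qed.
End BinomialBounds.

Definition cross_pairs (n : nat) (X Y : {set 'I_n}) : {set 'I_n * 'I_n} :=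
  [set e in pairs n | ((e.1 \in X) && (e.2 \in Y)) || ((e.2 \in X) && (e.1 \in Y))].

Lemma card_cross_pairs (n : nat) (X Y : {set 'I_n}) :
  (#|cross_pairs X Y| <= #|X| * #|Y|)%N.
Proof.
pose orient (e : 'I_n * 'I_n) := if (e.1 \in X) && (e.2 \in Y) then e else (e.2, e.1).
rewrite -cardsX -(@card_in_imset _ _ orient).
  apply/subset_leq_card/subsetP => _ /imsetP[[a b] + ->].
  rewrite !inE /orient /= => /andP[_].
  by case: ifP => [/andP[-> ->] //|_ /= /andP[-> ->]].
move=> [a b] [a' b']; rewrite !inE /orient /= => /andP[ab _] /andP[ab' _].
case: ifP => _; case: ifP => _ // [E1 E2]; subst => //;
  by have := ltn_trans ab ab'; rewrite ltnn.
Qed.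

Lemma card_incidences (T : finType) (X : {set T}) (N : T -> {set T}) :
  #|[set vu : T * T | (vu.1 \in X) && (vu.2 \in N vu.1)]| = (\sum_(v in X) #|N v|)%N.
Proof.
rewrite -sum1_card (eq_bigl (fun vu : T * T => (vu.1 \in X) && (vu.2 \in N vu.1))).
  rewrite -(pair_big_dep (mem X) (fun v u => u \in N v) (fun _ _ => 1%N)).
  by apply: eq_bigr => v _; rewrite sum1_card.
by move=> vu; rewrite inE.
Qed.

Definition nbhd_class (n : nat) (VQ : {set 'I_n}) (col : 'I_n -> nat)
  (EQ : {set 'I_n * 'I_n}) (k : nat) : {set 'I_n} :=
  (\bigcup_(v in VQ) nbhd EQ v) :&: colour_class VQ col k.

Lemma QH_cross_edges (R : realType) (n r : nat) (s : nat -> nat) (eta q : R)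
    (VQ : {set 'I_n}) (col : 'I_n -> nat) (EQ : {set 'I_n * 'I_n}) (X : {set 'I_n})
    (k m : nat) :
  in_QH r s eta q VQ col EQ X -> (1 <= k <= r)%N -> m%:R = eta * n%:R * q ->
  (#|X| * m <= #|EQ :&: cross_pairs X (nbhd_class VQ col EQ k)|)%N.
Proof.
move=> [EQp [_ [_ [Xc1 [Xind [_ [_ Hdeg]]]]]]] hk hm.
set Y := nbhd_class VQ col EQ k.
pose Nk v := nbhd EQ v :&: colour_class VQ col k.
pose D := [set vu : 'I_n * 'I_n | (vu.1 \in X) && (vu.2 \in Nk vu.1)].
have cD : #|D| = (#|X| * m)%N.
  rewrite card_incidences -sum_nat_const; apply: eq_bigr => v vX.
  by apply/eqP; rewrite -(eqr_nat R) Hdeg // hm.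
have D_cross vu : vu \in D -> [/\ vu.1 \in X, adjE EQ vu.1 vu.2, vu.2 \in Y & vu.2 \notin X].
  case: vu => v u; rewrite !inE /= => /andP[vX /andP[adj uk]].
  split => //; last by apply/negP => uX; have := Xind v u vX uX; rewrite adj.
  rewrite uk andbT; apply/bigcupP; exists v; last by rewrite inE.
  by have := subsetP Xc1 v vX; rewrite inE => /andP[].
pose orient (vu : 'I_n * 'I_n) := if vu \in EQ then vu else (vu.2, vu.1).
have orient_inj : {in D &, injective orient}.
  move=> a b /D_cross[a1 _ _ a2] /D_cross[b1 _ _ b2]; rewrite /orient.
  case: ifP => _; case: ifP => _ //.
  - by move=> ea; move: a1; rewrite ea /= (negbTE b2).
  - by move=> eb; move: b1; rewrite -eb /= (negbTE a2).
  - by case: a {a1 a2} => a1 a2; case: b {b1 b2} => b1 b2 /= [-> ->].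
rewrite -cD -(card_in_imset orient_inj); apply/subset_leq_card/subsetP.
move=> _ /imsetP[vu /D_cross[v1 adj v2 _] ->].
have oEQ : orient vu \in EQ.
  rewrite /orient; case: ifP => // /negbT nE.
  by move: adj; rewrite /adjE -surjective_pairing (negbTE nE).
rewrite inE oEQ inE (subsetP EQp _ oEQ) /=.
by move: oEQ; rewrite /orient; case: ifP => _ _ /=; rewrite v1 v2 ?orbT.
Qed.

Lemma small_class_bounds (R : realType) (n m x y : nat) (eta q c : R) :
  0 <= q -> 0 < c -> c <= eta / 4 -> m%:R = eta * n%:R * q ->
  y%:R < c * Num.min (n%:R) (x%:R * n%:R * q) ->
  [/\ (0 < x)%N, (4 * y <= x * m)%N & y%:R <= c * n%:R].
Proof.
move=> q0 c0 c4 hm hy.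
have y0 : (0 : R) <= y%:R by rewrite ler0n.
have min_n : Num.min (n%:R : R) (x%:R * n%:R * q) <= n%:R by rewrite ge_min lexx.
have min_x : Num.min (n%:R : R) (x%:R * n%:R * q) <= x%:R * n%:R * q.
  by rewrite ge_min lexx orbT.
have xnq0 : 0 <= x%:R * n%:R * q by rewrite !mulr_ge0 ?ler0n.
split.
- rewrite lt0n; apply/negP => /eqP x0.
  have : c * Num.min (n%:R : R) (x%:R * n%:R * q) <= 0.
    by rewrite pmulr_rle0 // x0 mulr0n !mul0r ge_min lexx orbT.
  lra.
- have : (y%:R : R) < eta / 4 * (x%:R * n%:R * q).
    apply: (lt_le_trans hy); apply: le_trans (_ : c * (x%:R * n%:R * q) <= _).
      by rewrite ler_wpM2l // ltW.
    by rewrite ler_wpM2r.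
  have -> : eta / 4 * (x%:R * n%:R * q) = (x * m)%:R / 4 by rewrite natrM hm; field.
  by rewrite ltr_pdivlMr // -natrM ltr_nat mulnC => /ltnW.
- by apply/ltW/(lt_le_trans hy); rewrite ler_wpM2l // ltW.
Qed.

Lemma expr_mul_le_expRN_half (R : realType) (A B : R) (x y m : nat) :
  0 <= A -> 0 <= B -> A * B ^+ 2 <= 1 -> B <= expR (-1) -> (4 * y <= x * m)%N ->
  A ^+ y * B ^+ (x * m) <= expR (- (m%:R / 2)) ^+ x.
Proof.
move=> A0 B0 AB Be h4.
have y2_le : (2 * y <= x * m)%N by apply: leq_trans h4; rewrite leq_mul2r orbT.
pose K := (x * m - 2 * y)%N.
have xmK : (x * m = 2 * y + K)%N by rewrite subnKC.
have K2 : (x * m <= 2 * K)%N by rewrite /K; lia.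
rewrite xmK exprD exprM mulrA -exprMn.
apply: le_trans (_ : 1 * expR (-1) ^+ K <= _).
  have AB0 : 0 <= A * B ^+ 2 by rewrite mulr_ge0 ?exprn_ge0.
  by apply: ler_pM; rewrite ?exprn_ge0 ?exprn_ile1 ?lerXn2r ?nnegrE ?expR_ge0.
rewrite mul1r -!expRM_natl ler_expR.
have : ((x * m)%:R : R) <= 2 * K%:R by rewrite -natrM ler_nat.
by rewrite natrM; lra.
Qed.

Lemma mul_expRN_half_le (R : realType) (a t : R) :
  1 < a -> 10 * ln a <= t -> a * expR (- (t / 2)) <= (a ^+ 4)^-1.
Proof.
move=> a1 ht; have a0 : 0 < a by lra.
have -> : (a ^+ 4)^-1 = a * expR (- ln a) ^+ 5.
  by rewrite expRN lnK ?posrE //; field; rewrite gt_eqF.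
by rewrite ler_wpM2l ?(ltW a0) // -expRM_natl ler_expR; lra.
Qed.

Lemma bin_mul_expr_le (R : realType) (a eta q : R) (x y m : nat) :
  0 < a -> 0 < eta -> 0 <= q -> (0 < x)%N -> (0 < m)%N -> m%:R = eta * a * q ->
  'C(x * y, x * m)%:R * q ^+ (x * m) <= (expR 1 * y%:R / (eta * a)) ^+ (x * m).
Proof.
move=> a0 eta0 q0 x0 m0 hm.
have qn0 : q != 0.
  by apply/eqP => q00; move: m0; rewrite -(ltr_nat R) hm q00 mulr0 ltxx.
apply: le_trans (_ : (expR 1 * (x * y)%:R / (x * m)%:R) ^+ (x * m) * q ^+ (x * m) <= _).
  by apply: ler_wpM2r; rewrite ?exprn_ge0 ?bin_le_expR1 ?muln_gt0 ?x0.
rewrite -exprMn (_ : _ * q = expR 1 * y%:R / (eta * a)) ?lexx //.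
rewrite !natrM hm; field.
by rewrite qn0 pnatr_eq0 -lt0n x0 !gt_eqF.
Qed.

Lemma ratio_bounds (R : realType) (a eta c : R) (y : nat) :
  0 < a -> 0 < eta -> (0 < y)%N ->
  c <= eta / expR 1 ^+ 2 -> c <= eta ^+ 2 / expR 1 ^+ 3 -> y%:R <= c * a ->
  let A := expR 1 * a / y%:R in let B := expR 1 * y%:R / (eta * a) in
  A * B ^+ 2 <= 1 /\ B <= expR (-1).
Proof.
set e := expR (1 : R); move=> a0 eta0 y0 ce1 ce2 hy A B.
have e0 : 0 < e by apply: expR_gt0.
have y0r : (0 : R) < y%:R by rewrite ltr0n.
split.
  rewrite (_ : A * B ^+ 2 = y%:R * e ^+ 3 / (eta ^+ 2 * a)); last first.
    by rewrite /A /B; field; rewrite !gt_eqF.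
  rewrite ler_pdivrMr ?mul1r ?mulr_gt0 ?exprn_gt0 // -ler_pdivlMr ?exprn_gt0 //.
  by rewrite mulrAC; apply: le_trans hy _; rewrite ler_wpM2r ?(ltW a0).
have -> : B = y%:R * e ^+ 2 / (eta * a) / e by rewrite /B; field; rewrite !gt_eqF.
rewrite expRN -/e ler_pdivrMr // mulVf ?gt_eqF // ler_pdivrMr ?mulr_gt0 // mul1r.
rewrite -ler_pdivlMr ?exprn_gt0 // mulrAC.
by apply: le_trans hy _; rewrite ler_wpM2r ?(ltW a0).
Qed.

Lemma witness_term_le (R : realType) (n m x y : nat) (eta q c : R) :
  (2 <= n)%N -> 0 < eta -> 0 <= q ->
  c <= eta / expR 1 ^+ 2 -> c <= eta ^+ 2 / expR 1 ^+ 3 ->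
  m%:R = eta * n%:R * q -> 10 * ln (n%:R : R) <= m%:R ->
  (0 < x)%N -> (4 * y <= x * m)%N -> y%:R <= c * n%:R ->
  'C(n, x)%:R * ('C(n, y)%:R * ('C(x * y, x * m)%:R * q ^+ (x * m)))
     <= (n%:R ^+ 4)^-1.
Proof.
set e := expR (1 : R); set a : R := n%:R.
move=> n2 eta0 q0 ce1 ce2 hm hml x0 h4 hy.
have a1 : 1 < a by rewrite ltr1n.
have a0 : 0 < a by lra.
have m0 : (0 < m)%N by rewrite -(ltr_nat R); have := ln_gt0 a1; lra.
have [->|y0] := posnP y.
  by rewrite muln0 bin0n eqn0Ngt muln_gt0 x0 m0 mul0r !mulr0 invr_ge0 exprn_ge0 ?ltW.
have [AB Be] := ratio_bounds a0 eta0 y0 ce1 ce2 hy.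
set A := e * a / y%:R in AB; set B := e * y%:R / (eta * a) in AB Be.
set z := a * expR (- (m%:R / 2)).
have z_le : z <= (a ^+ 4)^-1 by apply: mul_expRN_half_le.
have z1 : z <= 1.
  apply: (le_trans z_le).
  by rewrite invr_le1 ?unitfE ?expf_neq0 ?gt_eqF ?exprn_gt0 // exprn_ege1 // ltW.
apply: le_trans (_ : a ^+ x * (A ^+ y * B ^+ (x * m)) <= _).
  apply: ler_pM; rewrite ?mulr_ge0 ?exprn_ge0 ?ler0n //.
    by rewrite -natrX ler_nat bin_leq_expn.
  by apply: ler_pM; rewrite ?mulr_ge0 ?exprn_ge0 ?ler0n ?bin_le_expR1 ?bin_mul_expr_le.
apply: le_trans (_ : z ^+ x <= _); last first.
  by apply: (le_trans _ z_le); rewrite ler_iXnr // mulr_ge0 ?expR_ge0 ?ltW.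
rewrite /z [(a * _) ^+ x]exprMn ler_wpM2l ?exprn_ge0 ?(ltW a0) //.
have A0 : 0 <= A by rewrite /A !(divr_ge0, mulr_ge0) ?ler0n ?expR_ge0 ?ltW.
have B0 : 0 <= B by rewrite /B !(divr_ge0, mulr_ge0) ?ler0n ?expR_ge0 ?ltW.
exact: expr_mul_le_expRN_half.
Qed.

Lemma harmonic_ge_square_div_pow4 (R : realType) (n : nat) : (3 <= n)%N ->
  (n%:R ^+ 4)^-1 *+ (n.+1 * n.+1) <= harmonic n :> R.
Proof.
move=> n3; have n0 : (0 : R) < n%:R by rewrite ltr0n; lia.
rewrite -[_ *+ (_ * _)]mulr_natl /= ler_pdivrMr ?exprn_gt0 // mulrC ler_pdivlMr ?ltr0n //.
by rewrite -natrX -!natrM ler_nat; nia.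
Qed.

Section FirstMoment.
Variables (R : realType) (n r : nat) (s : nat -> nat) (eta q c : R) (m : nat).
Hypotheses (eta0 : 0 < eta) (q01 : 0 <= q <= 1) (c0 : 0 < c)
  (ce1 : c <= eta / expR 1 ^+ 2) (ce2 : c <= eta ^+ 2 / expR 1 ^+ 3)
  (hm : m%:R = eta * n%:R * q).

Local Notation good := (@good_event R n r s eta q c).

Lemma le_quarter_eta : c <= eta / 4.
Proof.
have e2 : 2 <= expR (1 : R) by have := expR_ge1Dx (1 : R); lra.
apply: (le_trans ce1); rewrite ler_pM2l // lef_pV2 ?posrE ?exprn_gt0 ?expR_gt0 //.
by rewrite expr2; nra.
Qed.

Definition bad_prob : R :=
  \sum_(E : {set 'I_n * 'I_n} | (E \subset pairs n) && ~~ `[< good E >])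
     binomial_weight (pairs n) q E.

Lemma gnp_good_eq : @gnp_prob R n q good = 1 - bad_prob.
Proof.
have := sum_binomial_weight (pairs n) q.
rewrite (bigID (fun E => `[< good E >])) /= => <-.
by rewrite /bad_prob addrK /gnp_prob big_mkcondr.
Qed.

Definition admissible (x y : nat) : bool :=
  [&& (0 < x)%N, (4 * y <= x * m)%N & y%:R <= c * n%:R].

Definition witness (W : {set 'I_n} * {set 'I_n} * {set 'I_n * 'I_n}) : bool :=
  let: (X, Y, T) := W in
  [&& admissible #|X| #|Y|, T \subset cross_pairs X Y & #|T| == (#|X| * m)%N].

Lemma good_of_no_witness (E : {set 'I_n * 'I_n}) :
  [forall W, witness W ==> ~~ (W.2 \subset E)] -> good E.
Proof.
move=> /forallP noW VQ col EQ X hQ EQE k hk.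
split; first exact/subset_leq_card/subsetIr.
rewrite -/(nbhd_class VQ col EQ k) leNgt; apply/negP => small.
have [x0 h4 hy] := small_class_bounds (andP q01).1 c0 le_quarter_eta hm small.
have [T TS cT] := exists_subset_card (QH_cross_edges hQ hk hm).
have /implyP/(_ _)/negP := noW (X, nbhd_class VQ col EQ k, T); apply => /=.
  by rewrite /admissible x0 h4 hy cT eqxx (subset_trans TS) ?subsetIr.
exact: subset_trans TS (subset_trans (subsetIl _ _) EQE).
Qed.

Lemma bad_prob_le_witness_sum : bad_prob <= \sum_(W | witness W) q ^+ #|W.2|.
Proof.
apply: le_trans (_ : _ <= \sum_(E : {set 'I_n * 'I_n} | E \subset pairs n)
   \sum_(W | witness W && (W.2 \subset E)) binomial_weight (pairs n) q E) _.
  rewrite /bad_prob big_mkcondr /=; apply: ler_sum => E _.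
  have w0 : 0 <= binomial_weight (pairs n) q E by apply: binomial_weight_ge0.
  case: ifP => [/negP bad|_]; last by apply: sumr_ge0.
  have [W /andP[wW WE]|noW] := pickP (fun W => witness W && (W.2 \subset E)).
    by rewrite (bigD1 W) ?wW ?WE //= lerDl sumr_ge0.
  case: bad; apply/asboolP/good_of_no_witness/forallP => W.
  by apply/implyP => wW; have := noW W; rewrite wW => /negbT.
rewrite (exchange_big_dep witness) /=; last by move=> E W _ /andP[].
apply: ler_sum => -[[X Y] T] wT.
have TP : T \subset pairs n.
  move: wT => /and3P[_ /subset_trans + _]; apply.
  by apply/subsetP => e; rewrite inE => /andP[].
rewrite -(sum_binomial_weight_supsets q TP) le_eqVlt; apply/predU1P; left.
by apply: eq_bigl => E; rewrite wT.
Qed.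

Definition witness_bound (x y : nat) : R :=
  if admissible x y then 'C(x * y, x * m)%:R * q ^+ (x * m) else 0.

Lemma sum_witness_le_bound (X Y : {set 'I_n}) :
  \sum_(T | witness (X, Y, T)) q ^+ #|T| <= witness_bound #|X| #|Y|.
Proof.
rewrite /witness_bound; case: ifP => adm /=; last by rewrite big_pred0 // => T; rewrite adm.
rewrite (eq_bigr (fun _ => q ^+ (#|X| * m))) => [|T /and3P[_ _ /eqP ->] //].
rewrite sumr_const -[q ^+ _ *+ _]mulr_natl ler_wpM2r ?exprn_ge0 ?(andP q01).1 // ler_nat.
have -> : #|[pred T | witness (X, Y, T)]| = 'C(#|cross_pairs X Y|, #|X| * m).
  by rewrite -cards_draws; apply: eq_card => T; rewrite !inE /= adm.
exact: leq_bin2l (card_cross_pairs X Y).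
Qed.

Lemma witness_sum_le :
  \sum_(W | witness W) q ^+ #|W.2| <=
  \sum_(x < n.+1) 'C(n, x)%:R * \sum_(y < n.+1) 'C(n, y)%:R * witness_bound x y.
Proof.
have -> : \sum_(x < n.+1) 'C(n, x)%:R * \sum_(y < n.+1) 'C(n, y)%:R * witness_bound x y =
    \sum_(X : {set 'I_n}) \sum_(Y : {set 'I_n}) witness_bound #|X| #|Y|.
  rewrite (sum_sets_card 'I_n (fun x => \sum_(Y : {set 'I_n}) witness_bound x #|Y|)).
  rewrite card_ord; apply: eq_bigr => x _.
  by rewrite (sum_sets_card 'I_n (witness_bound x)) card_ord.
have -> : \sum_(W | witness W) q ^+ #|W.2| =
    \sum_(XY : {set 'I_n} * {set 'I_n}) \sum_T (if witness (XY, T) then q ^+ #|T| else 0).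
  by rewrite big_mkcond pair_big; apply: eq_bigr => -[XY T].
rewrite [X in _ <= X]pair_big; apply: ler_sum => -[X Y] _ /=.
by rewrite -big_mkcond; apply: sum_witness_le_bound.
Qed.

Lemma bad_prob_le_harmonic : (3 <= n)%N -> 10 * ln (n%:R : R) <= m%:R ->
  bad_prob <= harmonic n.
Proof.
move=> n3 hml; apply: (le_trans bad_prob_le_witness_sum).
apply: (le_trans witness_sum_le); apply: le_trans (harmonic_ge_square_div_pow4 R n3).
have -> : (n%:R ^+ 4)^-1 *+ (n.+1 * n.+1) =
    \sum_(x < n.+1) \sum_(y < n.+1) (n%:R ^+ 4)^-1 :> R.
  by rewrite !sumr_const !card_ord mulrnA.
apply: ler_sum => x _; rewrite mulr_sumr; apply: ler_sum => y _.
rewrite /witness_bound; case: ifP => [/and3P[x0 h4 hy]|_].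
  by apply: (witness_term_le (eta := eta) (c := c)); rewrite ?(andP q01).1 //; lia.
by rewrite !mulr0 invr_ge0 exprn_ge0 ?ler0n.
Qed.

Lemma gnp_good_bounds : (3 <= n)%N -> 10 * ln (n%:R : R) <= m%:R ->
  1 - harmonic n <= @gnp_prob R n q good <= 1.
Proof.
move=> n3 hml; have bad0 : 0 <= bad_prob.
  by apply: sumr_ge0 => E _; apply: binomial_weight_ge0.
have := bad_prob_le_harmonic n3 hml.
by rewrite gnp_good_eq => hb; apply/andP; split; lra.
Qed.
End FirstMoment.

Local Open Scope classical_set_scope.
Local Open Scope ring_scope.

Lemma near_log_le_degree (R : realType) (eta : R) (p : nat -> R) : 0 < eta ->
  (fun n : nat => p n * n%:R / ln (n%:R : R)) @ \oo --> +oo ->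
  \forall n \near \oo, 10 * ln (n%:R : R) <= eta * n%:R * p n.
Proof.
move=> eta0 /cvgryPge/(_ (10 / eta)) large.
near=> n.
have ln0 : 0 < ln (n%:R : R) by rewrite ln_gt0 // ltr1n; near: n; exact: nbhs_infty_gt.
have : 10 / eta <= p n * n%:R / ln (n%:R : R) by near: n.
rewrite ler_pdivlMr // => h.
have -> : 10 * ln (n%:R : R) = eta * (10 / eta * ln n%:R) by field; rewrite gt_eqF.
by rewrite -[eta * n%:R * _]mulrA [n%:R * _]mulrC ler_wpM2l ?(ltW eta0).
Unshelve. all: by end_near.
Qed.

Theorem mainTheorem10 (R : realType) (eta : R) (heta : 0 < eta) :
  exists c : R, 0 < c /\
  forall (r : nat) (s : nat -> nat) (p : nat -> R),
    (2 <= r)%N ->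
    (fun n : nat => (s n)%:R / n%:R : R) @ \oo --> (0 : R) ->
    (forall n, 0 <= p n <= 1) ->
    (forall n : nat, exists m : nat, m%:R = eta * n%:R * p n) ->
    (fun n : nat => p n * n%:R / ln (n%:R : R)) @ \oo --> +oo ->
    (fun n : nat => @gnp_prob R n (p n) (@good_event R n r s eta (p n) c)) @ \oo --> (1 : R).
Proof.
pose e := expR (1 : R); pose c := Num.min (eta / e ^+ 2) (eta ^+ 2 / e ^+ 3).
have ce1 : c <= eta / e ^+ 2 by rewrite ge_min lexx.
have ce2 : c <= eta ^+ 2 / e ^+ 3 by rewrite ge_min lexx orbT.
have c0 : 0 < c by rewrite lt_min !divr_gt0 ?exprn_gt0 ?expR_gt0.
exists c; split => // r s p _ _ p01 hdeg hlim.
apply: (squeeze_cvgr (f := fun n => 1 - harmonic n) (h := fun=> 1)); last 2 first.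
- by rewrite -[X in _ --> X]subr0; apply: cvgB; [exact: cvg_cst | exact: cvg_harmonic].
- exact: cvg_cst.
near=> n.
have [m hm] := hdeg n.
apply: (@gnp_good_bounds R n r s eta (p n) c m); rewrite ?hm //.
  by near: n; exact: nbhs_infty_ge.
by near: n; apply: near_log_le_degree.
Unshelve. all: by end_near.
Qed.
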